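(* Let $m\ge1$ and $l\ge1$ be integers and let $j\in\{1,\dots,m\}$. Then there exists a positive integer \[ D_{m,l}=\prod_{\substack{p\le \frac{m+1}{2}\\ p\text{ prime}}}p^{\nu_p},\qquad \nu_p\ge\left(\left\lfloor\frac jp\right\rfloor+\left\lfloor\frac{m-j}{p}\right\rfloor\right)v_p((l-1)!), \] such that $D_{m,l}^{-1}B^*_{k,j}(t)\in\mathbb{Z}[t]$ for all $k=0,1,\dots,m$.
   Context: $v_p$ is the $p$-adic valuation. For $k=0,\dots,m$ let $l^{(k)}_h=l$ for $h\ne k$ and $l^{(k)}_k=l-1$ ($h=0,\dots,m$), and $L=(m+1)l-1$. For $j,k\in\{0,\dots,m\}$ define $\sigma^{(k,j)}_i$ by $\prod_{h=0}^m(h-j-w)^{l^{(k)}_h}=\sum_{i=0}^L\sigma^{(k,j)}_iw^i$, and $B^*_{k,j}(t)=\frac{1}{(l-1)!}\sum_{i=0}^{L}t^{L-i}\,i!\,\sigma^{(k,j)}_i$. *)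

From HB Require Import structures.
From mathcomp Require Import all_boot all_order all_algebra.
Set Implicit Arguments. Unset Strict Implicit. Unset Printing Implicit Defensive.
Import Order.TTheory GRing.Theory Num.Theory.
Local Open Scope ring_scope.

Definition lexp (l k h : nat) : nat := if h == k then (l - 1)%N else l.

Definition Ldeg (m l : nat) : nat := ((m.+1 * l) - 1)%N.

(* prod_{h=0}^m (h - j - w)^{l^{(k)}_h}, as a polynomial in w over rat;
   its i-th coefficient is sigma^{(k,j)}_i *)
Definition sigma_poly (m l k j : nat) : {poly rat} :=
  \prod_(h < m.+1) ((h%:R - j%:R)%:P - 'X) ^+ lexp l k h.

Definition sigma (m l k j i : nat) : rat := (sigma_poly m l k j)`_i.

Definition Bstar (m l k j : nat) : {poly rat} :=
  ((l - 1)`!%:R)^-1 *: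
    \sum_(i < (Ldeg m l).+1) ((i`!)%:R * sigma m l k j i) *: 'X^(Ldeg m l - i).

(* Call i! f_i the Hurwitz coefficients of a polynomial f.  By the Leibniz
   rule i! (fg)_i = sum_r C(i, r) (r! f_r) ((i - r)! g_(i - r)), divisibility
   of all Hurwitz coefficients by d is multiplicative in d.  The Hurwitz
   coefficients of (a - w)^n are (-1)^i n^_i a^(n - i): they are integers,
   divisible by n! when a = 0, and by p^(v_p(n!)) when p | a, because
   v_p((n - i)!) <= n - i.  In the product defining sigma^(k,j) the factor
   h = j is (-w)^n with n >= l - 1, and exactly floor(j/p) + floor((m - j)/p)
   other factors have p | h - j.  So every i! sigma_i is divisible by
   (l - 1)! p^(nu_p) for each prime p, hence by (l - 1)! D, and the
   coefficients of D^-1 B^*_(k,j) are the quotients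
   i! sigma_i / ((l - 1)! D). *)

From HB Require Import structures.
From mathcomp Require Import all_boot all_order all_algebra.
From mathcomp Require Import ring zify.
Import Order.TTheory GRing.Theory Num.Theory.

Set Implicit Arguments.
Unset Strict Implicit.
Unset Printing Implicit Defensive.

Lemma logn_fact_rec p n : prime p -> logn p n`! = n %/ p + logn p (n %/ p)`!.
Proof.
move=> p_pr; have p_gt0 := prime_gt0 p_pr.
elim: n => [|n IHn]; first by rewrite div0n fact0 logn1.
rewrite factS lognM ?fact_gt0 // IHn divnS //.
have [dvd_pn1 | ndvd_pn1] /= := boolP (p %| n.+1); last first.
  by rewrite logn_coprime ?prime_coprime.
have -> : n.+1 = p * (n %/ p).+1.
  by rewrite -[in LHS](divnK dvd_pn1) divnS // dvd_pn1 mulnC.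
by rewrite lognM // logn_prime // eqxx factS lognM ?fact_gt0 //; lia.
Qed.

Lemma logn_fact_leq p n : prime p -> logn p n`! <= n.
Proof.
move=> p_pr; have p_gt1 := prime_gt1 p_pr.
elim/ltn_ind: n => -[|n] IHn; first by rewrite fact0 logn1.
have lt_n1 : n.+1 %/ p < n.+1 := ltn_Pdiv p_gt1 (ltn0Sn n).
have le_2div : (n.+1 %/ p) * 2 <= n.+1.
  by rewrite (leq_trans _ (leq_divM n.+1 p)) // leq_mul2l p_gt1 orbT.
by rewrite logn_fact_rec //; have := IHn _ lt_n1; lia.
Qed.

Lemma sum_dvdn_distn p j m : j <= m ->
  \sum_(h < m.+1) ((h != j :> nat) && (p %| `|h - j|)) = j %/ p + (m - j) %/ p.
Proof.
move=> le_jm.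
have below : \sum_(0 <= h < j) ((h != j) && (p %| `|h - j|)) = j %/ p.
  rewrite divn_count_dvd big_add1 /= big_nat_rev /= add0n.
  apply: eq_big_nat => h /andP[_ lt_hj].
  rewrite distnEr ?leq_subr // subKn //.
  by rewrite ltn_eqF // ltn_subrL (leq_ltn_trans _ lt_hj).
have above :
    \sum_(j.+1 <= h < m.+1) ((h != j) && (p %| `|h - j|)) = (m - j) %/ p.
  rewrite divn_count_dvd !big_add1 /= -[j in LHS]add0n big_addn.
  apply: eq_big_nat => h _.
  by rewrite -addSn distnEl ?leq_addl // addnK gtn_eqF // addSn ltnS leq_addl.
rewrite -(big_mkord xpredT
  (fun h => nat_of_bool ((h != j) && (p %| `|h - j|)))).
rewrite (big_cat_nat _ (n := j)) //= ?leqW // [in X in _ + X]big_ltn ?ltnS //.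
by rewrite eqxx add0n below above.
Qed.

Lemma prime_powers_prod_dvd n (Q : pred nat) (e : nat -> nat) y :
  (forall p, prime p -> Q p -> p ^ e p %| y) ->
  \prod_(p < n | prime p && Q p) p ^ e p %| y.
Proof.
move=> dvd_py; elim: n => [|n IHn]; first by rewrite big_ord0 dvd1n.
rewrite big_mkcond big_ord_recr /= -big_mkcond /=.
case: ifP => [/andP[n_pr Qn] | _]; last by rewrite muln1.
rewrite Gauss_dvd ?IHn ?dvd_py //.
apply: (big_ind (coprime ^~ _)) => [|a b|p /andP[p_pr _]].
- exact: coprime1n.
- by rewrite coprimeMl => ->.
- rewrite coprimeXl // coprimeXr // prime_coprime //.
  by rewrite dvdn_prime2 // neq_ltn ltn_ord.
Qed.

Local Open Scope ring_scope.

Definition dvdq (d : nat) (x : rat) : Prop :=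
  exists2 z : int, x = z%:~R & (d%:Z %| z)%Z.

Lemma dvdq0 d : dvdq d 0.
Proof. by exists 0; rewrite ?dvdz0. Qed.

Lemma dvdqD d x y : dvdq d x -> dvdq d y -> dvdq d (x + y).
Proof.
by move=> [a -> da] [b -> db]; exists (a + b); [rewrite intrD | exact: rpredD].
Qed.

Lemma dvdq_sum d I (r : seq I) (P : pred I) (F : I -> rat) :
  (forall i, P i -> dvdq d (F i)) -> dvdq d (\sum_(i <- r | P i) F i).
Proof.
by move=> dvd_F; apply: big_ind => //; [exact: dvdq0 | exact: dvdqD].
Qed.

Lemma dvdqM a b x y : dvdq a x -> dvdq b y -> dvdq (a * b) (x * y).
Proof.
by move=> [u -> du] [v -> dv]; exists (u * v); rewrite ?intrM // PoszM dvdz_mul.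
Qed.

Lemma dvdq_nat d n : (d %| n)%N -> dvdq d n%:R.
Proof. by exists n%:Z; rewrite ?dvdzE. Qed.

Lemma dvdq_trans d e x : (d %| e)%N -> dvdq e x -> dvdq d x.
Proof. by move=> de [z -> ez]; exists z; rewrite ?(dvdz_trans _ ez) ?dvdzE. Qed.

Lemma dvdq_int d x : (0 < d)%N -> dvdq d x -> (d%:R)^-1 * x \is a Num.int.
Proof.
move=> d_gt0 [z -> /dvdzP[q ->]].
by rewrite intrM mulrC -mulrA mulfV ?mulr1 ?intr_int // pnatr_eq0 -lt0n.
Qed.

Lemma dvdq_prime_powers_prod a n (Q : pred nat) (e : nat -> nat) x :
  dvdq a x -> (forall p, prime p -> Q p -> dvdq (a * p ^ e p) x) ->
  dvdq (a * \prod_(p < n | prime p && Q p) p ^ e p) x.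
Proof.
move=> [z -> dvd_az] dvd_apz; exists z => //.
have [a0 | a_gt0] := posnP a; first by rewrite a0 mul0n -a0.
move: dvd_az; rewrite !dvdzE => /dvdnP[y z_eq].
rewrite z_eq mulnC dvdn_pmul2r //.
apply: prime_powers_prod_dvd => p p_pr Qp.
have [z' /intr_inj <-] := dvd_apz p p_pr Qp.
by rewrite dvdzE z_eq mulnC dvdn_pmul2r.
Qed.

Definition hurwitz_dvd (d : nat) (f : {poly rat}) : Prop :=
  forall i, dvdq d (i`!%:R * f`_i).

Lemma hurwitz_dvd_trans d e f :
  (d %| e)%N -> hurwitz_dvd e f -> hurwitz_dvd d f.
Proof. by move=> de dvd_f i; apply: dvdq_trans de (dvd_f i). Qed.

Lemma hurwitz_dvd1 : hurwitz_dvd 1 1.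
Proof. by move=> i; rewrite coef1 -natrM; apply: dvdq_nat; rewrite dvd1n. Qed.

Lemma hurwitz_dvdM a b f g :
  hurwitz_dvd a f -> hurwitz_dvd b g -> hurwitz_dvd (a * b) (f * g).
Proof.
move=> dvd_f dvd_g i; rewrite coefM mulr_sumr; apply: dvdq_sum => r _.
have le_ri : (r <= i)%N by rewrite -ltnS.
have -> : i`!%:R * (f`_r * g`_(i - r)) =
    'C(i, r)%:R * ((r`!%:R * f`_r) * ((i - r)`!%:R * g`_(i - r))) :> rat.
  by rewrite -(bin_fact le_ri) !natrM; ring.
by rewrite -[(a * b)%N]mul1n; apply: dvdqM; [apply: dvdq_nat | apply: dvdqM].
Qed.

Lemma hurwitz_dvd_prod I (r : seq I) (P : pred I)
    (d : I -> nat) (F : I -> {poly rat}) :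
  (forall i, P i -> hurwitz_dvd (d i) (F i)) ->
  hurwitz_dvd (\prod_(i <- r | P i) d i) (\prod_(i <- r | P i) F i).
Proof.
move=> dvd_F; apply: (big_ind2 hurwitz_dvd) => //; first exact: hurwitz_dvd1.
by move=> a f b g; apply: hurwitz_dvdM.
Qed.

Lemma coef_linear_pow (c : rat) n i :
  ((c%:P - 'X) ^+ n)`_i = (-1) ^+ i * 'C(n, i)%:R * c ^+ (n - i).
Proof.
have -> : (c%:P - 'X) ^+ n =
    \poly_(k < n.+1) ((-1) ^+ k * 'C(n, k)%:R * c ^+ (n - k)).
  rewrite poly_def exprDn; apply: eq_bigr => k _.
  rewrite -mul_polyC -mulr_natl [(- 'X) ^+ _]exprNn.
  rewrite !rmorphM /= !rmorphXn /= rmorphN1 rmorph_nat; ring.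
rewrite coef_poly; case: ltnP => // lt_ni.
by rewrite bin_small ?mulr0 ?mul0r.
Qed.

Lemma hurwitz_dvd_linear_pow (a : int) n d :
  (forall i, (i <= n)%N -> (d %| n ^_ i * `|a| ^ (n - i))%N) ->
  hurwitz_dvd d ((a%:~R%:P - 'X) ^+ n).
Proof.
move=> dvd_d i; rewrite coef_linear_pow.
have [le_in | lt_ni] := leqP i n; last first.
  by rewrite bin_small // mulr0 mul0r mulr0; apply: dvdq0.
exists ((-1) ^+ i * (n ^_ i)%:Z * a ^+ (n - i)).
  by rewrite -bin_ffact !rmorphM /= !rmorphXn /= rmorphN1; ring.
by rewrite -mulrA dvdz_mull // dvdzE abszM abszX dvd_d.
Qed.

Lemma hurwitz_dvd1_linear_pow (a : int) n :
  hurwitz_dvd 1 ((a%:~R%:P - 'X) ^+ n).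
Proof. by apply: hurwitz_dvd_linear_pow => i _; rewrite dvd1n. Qed.

Lemma hurwitz_dvd_exprNX n : hurwitz_dvd n`! ((- 'X) ^+ n).
Proof.
have := @hurwitz_dvd_linear_pow 0 n n`!; rewrite polyC0 sub0r; apply=> i le_in.
have [lt_in | ge_in] := ltnP i n; first by rewrite exp0n ?subn_gt0 // muln0.
by rewrite (@anti_leq i n) ?le_in // ffactnn dvdn_mulr.
Qed.

Lemma hurwitz_dvd_linear_pow_pfactor (a : int) p n : (p %| `|a|)%N ->
  hurwitz_dvd (p ^ logn p n`!) ((a%:~R%:P - 'X) ^+ n).
Proof.
have [p_pr dvd_pa | /negbTE np _] := boolP (prime p); last first.
  by rewrite lognE np expn0; apply: hurwitz_dvd1_linear_pow.
apply: hurwitz_dvd_linear_pow => i le_in.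
apply: (@dvdn_trans (n ^_ i * p ^ (n - i))); first last.
  by rewrite dvdn_mul // dvdn_exp2r.
rewrite pfactor_dvdn ?muln_gt0 ?ffact_gt0 ?le_in ?expn_gt0 ?prime_gt0 //.
rewrite lognM ?ffact_gt0 ?expn_gt0 ?prime_gt0 // pfactorK //.
rewrite -(ffact_fact le_in) lognM ?ffact_gt0 ?fact_gt0 //.
by rewrite leq_add2l logn_fact_leq.
Qed.

Lemma fact_dvdn_fact a b : (a <= b)%N -> (a`! %| b`!)%N.
Proof.
by move=> le_ab; rewrite -(ffact_fact (leq_subr a b)) subKn // dvdn_mull.
Qed.

Lemma sigma_hurwitz_dvd m l k j p : (j <= m)%N ->
  hurwitz_dvd ((l - 1)`! * p ^ (logn p (l - 1)`! * (j %/ p + (m - j) %/ p)))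
              (sigma_poly m l k j).
Proof.
move=> le_jm; set E := (l - 1)`!; set e := logn p E.
pose c (h : 'I_m.+1) : nat := (h != j :> nat) && (p %| `|h - j|)%N.
pose d (h : 'I_m.+1) := ((if h == j :> nat then E else 1) * p ^ (e * c h))%N.
have -> : (E * p ^ (e * (j %/ p + (m - j) %/ p)) = \prod_(h < m.+1) d h)%N.
  rewrite -sum_dvdn_distn // big_split /= -expn_sum -big_distrr /=.
  congr (_ * _)%N.
  rewrite (bigD1 (Ordinal (le_jm : (j < m.+1)%N))) //= eqxx big1 ?muln1 // => h.
  by rewrite -val_eqE /= => /negbTE ->.
apply: hurwitz_dvd_prod => h _; rewrite /d /c.
have -> : (h%:R - j%:R : rat) = (h%:Z - j%:Z)%:~R by rewrite intrB.
set n := lexp l k h.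
have dvd_En : (E %| n`!)%N.
  apply: fact_dvdn_fact; rewrite /n /lexp.
  by case: ifP => // _; apply: leq_subr.
have [hj | _] := eqVneq (h : nat) j.
  rewrite hj subrr polyC0 sub0r muln0 muln1.
  exact: hurwitz_dvd_trans dvd_En (hurwitz_dvd_exprNX n).
rewrite mul1n /=; have [dvd_p_hj | _] := boolP (p %| `|h - j|)%N; last first.
  by rewrite muln0; apply: hurwitz_dvd1_linear_pow.
rewrite /= muln1.
apply: hurwitz_dvd_trans (hurwitz_dvd_linear_pow_pfactor n dvd_p_hj).
by rewrite dvdn_exp2l // dvdn_leq_log ?fact_gt0.
Qed.

Lemma Bstar_scale_polyOver_int m l k j d : (0 < d)%N ->
  hurwitz_dvd ((l - 1)`! * d) (sigma_poly m l k j) ->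
  (d%:R : rat)^-1 *: Bstar m l k j \is a polyOver Num.int.
Proof.
move=> d_gt0 dvd_sigma; apply/polyOverP => n.
rewrite /Bstar scalerA coefZ coef_sum mulr_sumr; apply: rpred_sum => i _.
rewrite coefZ coefXn mulrA -invfM -natrM mulnC.
apply: rpredM (rpred_nat _ _); apply: dvdq_int (dvd_sigma i).
by rewrite muln_gt0 d_gt0 fact_gt0.
Qed.

Theorem theorem6p2 (m l j : nat) :
  (1 <= m)%N -> (1 <= l)%N -> (1 <= j <= m)%N ->
  exists nu : nat -> nat,
    (forall p : nat, prime p -> (p.*2 <= m.+1)%N ->
       ((j %/ p + (m - j) %/ p) * logn p (l - 1)`! <= nu p)%N) /\
    let D := (\prod_(p < m.+2 | prime p && (p.*2 <= m.+1)%N) p ^ nu p)%N in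
    (0 < D)%N /\
    forall k : nat, (k <= m)%N ->
      (D%:R : rat)^-1 *: Bstar m l k j \is a polyOver Num.int.
Proof.
move=> _ _ /andP[_ le_jm].
pose nu p := (logn p (l - 1)`! * (j %/ p + (m - j) %/ p))%N.
exists nu; split=> [p _ _|D]; first by rewrite mulnC.
have D_gt0 : (0 < D)%N.
  by apply: prodn_cond_gt0 => p /andP[p_pr _]; rewrite expn_gt0 prime_gt0.
split=> // k _; apply: (Bstar_scale_polyOver_int D_gt0) => i.
apply: (@dvdq_prime_powers_prod _ _ (fun p => p.*2 <= m.+1)%N nu) => [|p _ _].
  by have := sigma_hurwitz_dvd l k 1 le_jm i; rewrite exp1n muln1.
exact: sigma_hurwitz_dvd.
Qed.
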